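(* Let $C$ be a binary linear constant weight code of dimension at least $2$. Then $\mathrm{PAut}(C)$ has a subgroup isomorphic to $S_3$.
   Context: A binary linear constant weight code of weight $w$ is an $\mathbb{F}_2$-subspace of $\mathbb{F}_2^n$ all of whose non-zero vectors have exactly $w$ coordinates equal to $1$. $S_n$ acts on $\mathbb{F}_2^n$ by $\sigma(v_1,\dots,v_n)=(v_{\sigma^{-1}(1)},\dots,v_{\sigma^{-1}(n)})$, and $\mathrm{PAut}(C)=\{\sigma\in S_n:\sigma(C)=C\}$. *)

From HB Require Import structures.
From mathcomp Require Import all_boot all_order all_algebra all_fingroup.
Set Implicit Arguments. Unset Strict Implicit. Unset Printing Implicit Defensive.
Import GRing.Theory.
Local Open Scope ring_scope.

Definition wt n (v : 'rV['F_2]_n) : nat := #|[set i : 'I_n | v 0 i != 0]|.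

Definition permv n (s : 'S_n) (v : 'rV['F_2]_n) : 'rV['F_2]_n :=
  \row_i v 0 ((s^-1)%g i).

Definition constant_weight n (C : {vspace 'rV['F_2]_n}) (w : nat) : Prop :=
  forall v, v \in C -> v != 0 -> wt v = w.

Definition PAut n (C : {vspace 'rV['F_2]_n}) : {set 'S_n} :=
  [set s : 'S_n | [set permv s v | v in [set x | x \in C]] == [set x | x \in C]].

(* Fix coordinates p, q and codewords c1, c2 with (c1_p, c1_q) = (1, 0) and
   (c2_p, c2_q) = (0, 1).  Every codeword is c_p c1 + c_q c2 plus a codeword
   vanishing at p and q, so S_3, permuting the nonzero words c1, c2, c1 + c2 of
   span(c1, c2) and fixing the others, acts faithfully and linearly on C.
   Constant weight forces each of these automorphisms g to be a coordinate
   permutation: double counting the weights in the kernel of a nonzero linear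
   form phi on C shows that the number of coordinates j with c_j = phi c for
   all c in C does not depend on phi, so the coordinates realizing
   c |-> (g c)_j can be matched bijectively with those realizing c |-> c_j. *)

From mathcomp Require Import all_boot all_order all_algebra all_fingroup finfield.
From mathcomp Require Import zify ring.
Set Implicit Arguments. Unset Strict Implicit. Unset Printing Implicit Defensive.
Import GRing.Theory.
Local Open Scope ring_scope.

Lemma F2_cases (x : 'F_2) : x = 0 \/ x = 1.
Proof. by case: x => [[|[|//]]] ?; [left | right]; apply: val_inj. Qed.

Lemma F2_neq0 (x : 'F_2) : (x != 0) = (x == 1).
Proof. by case: (F2_cases x) => ->. Qed.

Lemma nonzero_entry n (u : 'rV['F_2]_n) : u != 0 -> exists p, u 0 p = 1.
Proof.
move=> u_nz; have /existsP[p up] : [exists p, u 0 p != 0].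
  apply: contraR u_nz => /existsPn u0; apply/eqP/rowP => i.
  by rewrite mxE; apply/eqP; rewrite -[_ == 0]negbK u0.
by exists p; apply/eqP; rewrite -F2_neq0.
Qed.

Lemma sum_card_rel (I J : finType) (A : {set I}) (r : I -> J -> bool) :
  (\sum_(i in A) #|[set j | r i j]| = \sum_j #|[set i in A | r i j]|)%N.
Proof.
have card_pred (T : finType) (P : pred T) : #|[set x | P x]| = (\sum_x P x)%N.
  by rewrite -sum1_card big_mkcond; apply: eq_bigr => x _; rewrite inE; case: (P x).
under eq_bigr do rewrite card_pred.
rewrite exchange_big; apply: eq_bigr => j _.
rewrite card_pred big_mkcond; apply: eq_bigr => i _.
by case: (i \in A); case: (r i j).
Qed.

Section AdditiveForm.
Variables (V : finZmodType) (S : {set V}) (psi : V -> 'F_2).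
Hypotheses (S_add : {in S &, forall x y, x + y \in S})
  (psi_add : {in S &, {morph psi : x y / x + y}}).
Variables (c0 : V) (c0S : c0 \in S) (psi_c0 : psi c0 = 1).

Lemma card_fibre0_fibre1 :
  #|[set x in S | psi x == 0]| = #|[set x in S | psi x == 1]|.
Proof.
have transl_sub b : [set x + c0 | x in [set x in S | psi x == b]]
                      \subset [set x in S | psi x == b + 1].
  apply/subsetP => y /imsetP[x]; rewrite !inE => /andP[xS /eqP <-] ->.
  by rewrite S_add // psi_add // psi_c0 eqxx.
have := transl_sub 0; have := transl_sub 1.
move=> /subset_leq_card + /subset_leq_card; rewrite !card_imset; try exact: addIr.
by rewrite add0r addrr_pchar2 ?pchar_Fp // => ? ?; apply/eqP; rewrite eqn_leq; apply/andP.
Qed.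

Lemma card_fibre0 : #|S| = #|[set x in S | psi x == 0]|.*2.
Proof.
rewrite -(cardsID [set x | psi x == 0] S) -addnn; congr (_ + _)%N.
  by apply: eq_card => x; rewrite !inE andbC.
rewrite [X in (_ = X)%N]card_fibre0_fibre1; apply: eq_card => x.
by rewrite !inE F2_neq0 andbC.
Qed.

End AdditiveForm.

Lemma exists_nonzero (V : finZmodType) (S : {set V}) :
  (1 < #|S|)%N -> exists2 x, x \in S & x != 0.
Proof.
case/card_gt1P => x [y [xS yS xy]].
have [x0 | x_nz] := eqVneq x 0; last by exists x.
by exists y; rewrite // -x0 eq_sym.
Qed.

Section CoordinateForms.
Variables (n w : nat) (C : {vspace 'rV['F_2]_n}).
Hypothesis C_cw : constant_weight C w.
Local Notation V := 'rV['F_2]_n.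

Definition coords (phi : V -> 'F_2) : {set 'I_n} :=
  [set j | [forall c : V, (c \in C) ==> (c 0 j == phi c)]].

Lemma coordsP (phi : V -> 'F_2) j :
  reflect {in C, forall c : V, c 0 j = phi c} (j \in coords phi).
Proof.
rewrite inE; apply: (iffP forallP) => [H c cC | H c].
  by have /implyP/(_ cC)/eqP := H c.
by apply/implyP => cC; rewrite H.
Qed.

Lemma eq_coords phi psi : {in C, phi =1 psi} -> coords phi = coords psi.
Proof.
move=> eq_phi; apply/setP => j.
by apply/coordsP/coordsP => H c cC; rewrite H // eq_phi.
Qed.

Lemma coords_coord j : j \in coords (fun c => c 0 j).
Proof. exact/coordsP. Qed.

Lemma coords_coordE phi i :
  i \in coords phi -> coords (fun c => c 0 i) = coords phi.
Proof. by move/coordsP; apply: eq_coords. Qed.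

Lemma nonzero_coord_witness j :
  j \notin coords (fun=> 0) -> exists2 a, a \in C & a 0 j = 1.
Proof.
move=> j_nz; have /exists_inP[a aC /eqP aj] : [exists a : V in C, a 0 j == 1].
  apply: contraR j_nz => /exists_inPn aj0; apply/coordsP => a aC.
  by apply/eqP; rewrite -[_ == 0]negbK F2_neq0 aj0.
by exists a.
Qed.

Section NonzeroForm.
Variable phi : V -> 'F_2.
Hypothesis phi_add : {in C &, {morph phi : x y / x + y}}.
Variables (c0 : V) (c0C : c0 \in C) (phi_c0 : phi c0 = 1).

Definition kerC : {set V} := [set c | (c \in C) && (phi c == 0)].
Definition generic : {set 'I_n} := ~: (coords (fun=> 0) :|: coords phi).

Lemma kerC_add : {in kerC &, forall x y, x + y \in kerC}.
Proof.
move=> x y; rewrite !inE => /andP[xC /eqP phix] /andP[yC /eqP phiy].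
by rewrite rpredD // phi_add // phix phiy addr0.
Qed.

Lemma kerC0 : 0 \in kerC.
Proof.
have := phi_add (rpred0 C) (rpred0 C); rewrite addr0 => /esym/eqP.
by rewrite inE rpred0 -subr_eq0 addrK.
Qed.

Lemma card_kerC : #|C| = #|kerC|.*2.
Proof.
have CS : {in [set c : V | c \in C] &, forall x y, x + y \in [set c | c \in C]}.
  by move=> x y; rewrite !inE; apply: rpredD.
have phiS : {in [set c : V | c \in C] &, {morph phi : x y / x + y}}.
  by move=> x y; rewrite !inE; apply: phi_add.
have -> : #|C| = #|[set c : V | c \in C]| by apply: eq_card => c; rewrite inE.
rewrite (card_fibre0 CS phiS (c0 := c0)) ?inE //; congr (_.*2); apply: eq_card => c.
by rewrite !inE.
Qed.

Lemma sum_wt_kerC : (\sum_(c in kerC) wt c = (#|kerC| - 1) * w)%N.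
Proof.
rewrite (big_setD1 0) ?kerC0 //= [wt 0](_ : _ = 0%N) ?add0n; last first.
  by apply/eqP; rewrite cards_eq0; apply/eqP/setP => i; rewrite !inE mxE eqxx.
rewrite (eq_bigr (fun=> w)) => [|c]; last first.
  by rewrite !inE => /andP[c_neq0 /andP[cC _]]; apply: C_cw.
by rewrite sum_nat_const (cardsD1 0 kerC) kerC0 add1n subn1.
Qed.

Lemma generic_witness j : j \in generic -> exists2 c, c \in kerC & c 0 j = 1.
Proof.
rewrite in_setC in_setU negb_or => /andP[not0 notphi].
have [a aC aj] := nonzero_coord_witness not0.
have /exists_inP[b bC bj] : [exists b : V in C, b 0 j != phi b].
  apply: contraR notphi => /exists_inPn bj; apply/coordsP => b bC.
  by apply/eqP; have := bj b bC; rewrite negbK.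
have [phia | phia] := F2_cases (phi a); first by exists a; rewrite // inE aC phia.
have [phib | phib] := F2_cases (phi b).
  by exists b; rewrite ?inE ?bC ?phib //; apply/eqP; rewrite -F2_neq0 -phib.
exists (a + b); first by rewrite inE rpredD // phi_add // phia phib addrr_pchar2 ?pchar_Fp.
have [bj0 | bj1] := F2_cases (b 0 j); last by move: bj; rewrite bj1 phib eqxx.
by rewrite mxE aj bj0 addr0.
Qed.

Lemma card_kerC_support j :
  #|[set c in kerC | c 0 j != 0]|.*2 = (#|kerC| * (j \in generic))%N.
Proof.
have [jg | jng] := boolP (j \in generic); last first.
  rewrite muln0; apply/eqP; rewrite double_eq0 cards_eq0; apply/eqP/setP => c.
  rewrite !inE; apply/negbTE; rewrite negb_and negbK -implybE; apply/implyP.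
  move=> /andP[cC /eqP phic]; move: jng; rewrite in_setC in_setU negbK.
  by case/orP => /coordsP -> //; rewrite phic.
have [c1 c1K c1j] := generic_witness jg.
have coordD : {in kerC &, {morph (fun c : V => c 0 j) : x y / x + y}}.
  by move=> x y _ _ /=; rewrite mxE.
rewrite muln1 (card_fibre0 kerC_add coordD c1K c1j).
rewrite (card_fibre0_fibre1 kerC_add coordD c1K c1j).
by congr (_.*2); apply: eq_card => c; rewrite !inE F2_neq0.
Qed.

Lemma weight_count : (((#|kerC| - 1) * w).*2 = #|kerC| * #|generic|)%N.
Proof.
rewrite -sum_wt_kerC /wt sum_card_rel -mul2n big_distrr /=.
under eq_bigr do rewrite mul2n card_kerC_support.
rewrite -big_distrr /=; congr (_ * _)%N.
by rewrite -sum1_card [RHS]big_mkcond; apply: eq_bigr => j _; case: (j \in generic).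
Qed.

Lemma card_coords_generic :
  (#|coords (fun=> 0%R)| + #|coords phi| + #|generic| = n)%N.
Proof.
have disj : coords (fun=> 0) :&: coords phi = set0.
  apply/setP => j; rewrite in_setI in_set0; apply/negbTE/andP => -[/coordsP/(_ c0 c0C) c0j].
  by move/coordsP/(_ c0 c0C); rewrite c0j phi_c0.
by rewrite -cardsUI disj cards0 addn0 cardsC card_ord.
Qed.

End NonzeroForm.

Lemma card_coords_eq phi psi :
    {in C &, {morph phi : x y / x + y}} -> (exists2 c, c \in C & phi c = 1) ->
    {in C &, {morph psi : x y / x + y}} -> (exists2 c, c \in C & psi c = 1) ->
  #|coords phi| = #|coords psi|.
Proof.
move=> phi_add [a aC phia] psi_add [b bC psib].
have eq_ker : #|kerC phi| = #|kerC psi|.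
  apply: (can_inj doubleK).
  by rewrite -(card_kerC phi_add aC phia) -(card_kerC psi_add bC psib).
have ker_gt0 : (0 < #|kerC psi|)%N by apply/card_gt0P; exists 0; apply: kerC0.
have eq_generic : #|generic phi| = #|generic psi|.
  apply/eqP; rewrite -(eqn_pmul2l ker_gt0) -{1}eq_ker.
  by rewrite -(weight_count phi_add) eq_ker (weight_count psi_add).
have := card_coords_generic aC phia; have := card_coords_generic bC psib.
rewrite eq_generic; lia.
Qed.

End CoordinateForms.

Lemma permv_inj n (s : 'S_n) : injective (permv s).
Proof.
move=> x y /rowP eq_xy; apply/rowP => i.
by have := eq_xy (s i); rewrite !mxE -permM mulgV perm1.
Qed.

Section CoordinatePermutation.
Variables (n w : nat) (C : {vspace 'rV['F_2]_n}) (gT : finGroupType).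
Hypothesis C_cw : constant_weight C w.
Local Notation V := 'rV['F_2]_n.
Variable act : gT -> V -> V.
Hypotheses (act_in : forall g c, c \in C -> act g c \in C)
  (actD : forall g, {in C &, {morph act g : x y / x + y}})
  (act1 : {in C, forall c, act 1%g c = c})
  (actM : forall g h, {in C, forall c, act (g * h)%g c = act h (act g c)}).

Lemma actKV g c : c \in C -> act g (act g^-1 c) = c.
Proof. by move=> cC; rewrite -actM ?mulVg ?act1. Qed.

Lemma card_coords_act g j :
  #|coords C (fun c => act g c 0 j)| = #|coords C (fun c => c 0 j)|.
Proof.
have [/coordsP j0 | /nonzero_coord_witness[a aC aj]] := boolP (j \in coords C (fun=> 0)).
  suff -> : coords C (fun c => act g c 0 j) = coords C (fun c => c 0 j) by [].
  by apply: eq_coords => c cC; rewrite !j0 ?act_in.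
apply: (card_coords_eq C_cw).
- by move=> x y xC yC /=; rewrite actD // mxE.
- by exists (act g^-1 a); rewrite ?act_in // actKV.
- by move=> x y _ _ /=; rewrite mxE.
- by exists a.
Qed.

(* The coordinates realizing a given form are matched by their rank in [enum]:
   [tau g j] is the coordinate of the same rank as [j] among those realizing
   [c |-> (act g c)_j].  Ranks are preserved, which makes [tau] multiplicative. *)
Definition coord_rank (j : 'I_n) : nat := index j (enum (coords C (fun c => c 0 j))).

Definition tau g j : 'I_n :=
  nth j (enum (coords C (fun c => act g c 0 j))) (coord_rank j).

Lemma coord_rank_lt g j :
  (coord_rank j < size (enum (coords C (fun c => act g c 0%R j))))%N.
Proof. by rewrite -cardE card_coords_act cardE index_mem mem_enum coords_coord. Qed.

Lemma tau_coords g j : tau g j \in coords C (fun c => act g c 0 j).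
Proof. by rewrite -mem_enum mem_nth ?coord_rank_lt. Qed.

Lemma tauE g j c : c \in C -> c 0 (tau g j) = act g c 0 j.
Proof. by move/(coordsP _ _ _ (tau_coords g j)). Qed.

Lemma coord_rank_tau g j : coord_rank (tau g j) = coord_rank j.
Proof.
by rewrite /coord_rank (coords_coordE (tau_coords g j)) index_uniq ?enum_uniq ?coord_rank_lt.
Qed.

Lemma tauM g h j : tau (g * h)%g j = tau g (tau h j).
Proof.
have same_form :
    coords C (fun c => act g c 0 (tau h j)) = coords C (fun c => act (g * h)%g c 0 j).
  by apply: eq_coords => c cC; rewrite tauE ?act_in ?actM.
rewrite [RHS]/tau same_form coord_rank_tau; apply: set_nth_default.
exact: coord_rank_lt.
Qed.

Lemma tau_inj g : injective (tau g).
Proof.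
move=> i j tau_ij.
have same_coord : {in C, forall c : V, c 0 i = c 0 j}.
  by move=> c cC; rewrite -(actKV g cC) -!tauE ?act_in // tau_ij.
have eq_coords_ij := eq_coords same_coord.
have eq_rank : coord_rank i = coord_rank j.
  by rewrite -(coord_rank_tau g i) tau_ij coord_rank_tau.
have j_in : j \in enum (coords C (fun c => c 0 i)).
  by rewrite eq_coords_ij mem_enum coords_coord.
have i_in : i \in enum (coords C (fun c => c 0 i)) by rewrite mem_enum coords_coord.
rewrite /coord_rank -eq_coords_ij in eq_rank.
by rewrite -(nth_index i i_in) eq_rank nth_index.
Qed.

Definition coord_perm g : 'S_n := ((perm (@tau_inj g))^-1)%g.

Lemma permv_coord_perm g c : c \in C -> permv (coord_perm g) c = act g c.
Proof. by move=> cC; apply/rowP => i; rewrite mxE invgK permE tauE. Qed.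

Lemma coord_permM : {in [set: gT] &, {morph coord_perm : g h / g * h}}%g.
Proof.
move=> g h _ _; rewrite /coord_perm -invMg; congr (_^-1)%g.
by apply/permP => j; rewrite permM !permE tauM.
Qed.

Lemma coord_perm_PAut g : coord_perm g \in PAut C.
Proof.
rewrite inE eqEcard card_imset ?leqnn ?andbT; last exact: permv_inj.
by apply/subsetP => y /imsetP[c]; rewrite !inE => cC ->; rewrite permv_coord_perm ?act_in.
Qed.

Hypothesis act_faithful : forall g, {in C, forall c, act g c = c} -> g = 1%g.

Lemma faithful_action_PAut :
  exists H : {group 'S_n}, H \subset PAut C /\ (H \isog [set: gT])%g.
Proof.
pose f := Morphism coord_permM.
have f_inj : ('injm f)%g.
  apply/subsetP => g /mker /= fg1; rewrite inE; apply/eqP/act_faithful => c cC.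
  by rewrite -permv_coord_perm // fg1; apply/rowP => i; rewrite mxE invg1 perm1.
exists (f @* [set: gT])%G; split; last by rewrite isog_sym sub_isog.
by apply/subsetP => y /morphimP[g _ _ ->]; apply: coord_perm_PAut.
Qed.

End CoordinatePermutation.

Section S3Action.
Variables (n : nat) (C : {vspace 'rV['F_2]_n}).
Local Notation V := 'rV['F_2]_n.
Variables (p q : 'I_n) (c1 c2 : V).
Hypotheses (c1C : c1 \in C) (c2C : c2 \in C).
Hypotheses (c1p : c1 0 p = 1) (c1q : c1 0 q = 0) (c2p : c2 0 p = 0) (c2q : c2 0 q = 1).

Local Notation i0 := (@Ordinal 3 0 isT).
Local Notation i1 := (@Ordinal 3 1 isT).
Local Notation i2 := (@Ordinal 3 2 isT).

Lemma ord3P (i : 'I_3) : [\/ i = i0, i = i1 | i = i2].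
Proof.
by case: i => [[|[|[|//]]] ?]; [apply: Or31 | apply: Or32 | apply: Or33]; apply: val_inj.
Qed.

Definition tri (i : 'I_3) : V := nth 0 [:: c1; c2; c1 + c2] i.

Lemma tri_in i : tri i \in C.
Proof. by have [->|->|->] := ord3P i; rewrite /= ?rpredD. Qed.

Lemma tri_inj : injective tri.
Proof.
move=> i j; have [->|->|->] := ord3P i; have [->|->|->] := ord3P j => //=;
  move/(congr1 (fun v : V => (v 0 p, v 0 q))); rewrite ?mxE c1p c1q c2p c2q => /eqP //.
Qed.

Lemma tri_add (s : 'S_3) : tri (s i0) + tri (s i1) = tri (s i2).
Proof.
have : [&& s i0 != s i1, s i0 != s i2 & s i1 != s i2] by rewrite !(inj_eq perm_inj).
have [->|->|->] := ord3P (s i0); have [->|->|->] := ord3P (s i1);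
  have [->|->|->] := ord3P (s i2) => //= _; apply/rowP => k; rewrite !mxE;
  by case: (F2_cases (c1 0 k)) => ->; case: (F2_cases (c2 0 k)) => ->; apply/eqP.
Qed.

Definition s3act (s : 'S_3) (c : V) : V :=
  c + c 0 p *: (tri (s i0) - c1) + c 0 q *: (tri (s i1) - c2).

Lemma s3act1 c : s3act 1 c = c.
Proof. by rewrite /s3act !perm1 !subrr !scaler0 !addr0. Qed.

Lemma s3act_in s c : c \in C -> s3act s c \in C.
Proof. by move=> cC; rewrite !rpredD ?rpredZ ?rpredB ?tri_in. Qed.

Lemma s3actD s : {morph s3act s : x y / x + y}.
Proof. by move=> x y; apply/rowP => k; rewrite !mxE; ring. Qed.

Lemma s3actZ s a : {morph s3act s : x / a *: x}.
Proof. by move=> x; apply/rowP => k; rewrite !mxE; ring. Qed.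

Lemma s3act_fix s (c : V) : c 0 p = 0 -> c 0 q = 0 -> s3act s c = c.
Proof. by move=> cp cq; rewrite /s3act cp cq !scale0r !addr0. Qed.

Lemma s3act_tri s i : s3act s (tri i) = tri (s i).
Proof.
have [->|->|->] := ord3P i => /=; rewrite -?tri_add;
  by apply/rowP => k; rewrite !mxE ?c1p ?c1q ?c2p ?c2q; ring.
Qed.

Lemma s3actE s (c : V) :
  s3act s c = (c - c 0 p *: c1 - c 0 q *: c2) + c 0 p *: tri (s i0) + c 0 q *: tri (s i1).
Proof. by apply/rowP => k; rewrite !mxE; ring. Qed.

Lemma s3actM s t (c : V) : s3act (s * t)%g c = s3act t (s3act s c).
Proof.
have d_fix : s3act t (c - c 0 p *: c1 - c 0 q *: c2) = c - c 0 p *: c1 - c 0 q *: c2.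
  by apply: s3act_fix; rewrite !mxE ?c1p ?c1q ?c2p ?c2q; ring.
by rewrite [LHS]s3actE [s3act s c]s3actE s3actD s3actD d_fix !s3actZ !s3act_tri !permM.
Qed.

Lemma s3act_faithful s : {in C, forall c : V, s3act s c = c} -> s = 1%g.
Proof.
move=> s_fix.
have s_i0 : s i0 = i0 by apply: tri_inj; rewrite -s3act_tri s_fix ?tri_in.
have s_i1 : s i1 = i1 by apply: tri_inj; rewrite -s3act_tri s_fix ?tri_in.
have s_i2 : s i2 = i2.
  have [s2|s2|//] := ord3P (s i2); rewrite -s2 in s_i0 s_i1.
    by move/perm_inj: s_i0.
  by move/perm_inj: s_i1.
by apply/permP => i; rewrite perm1; have [->|->|->] := ord3P i.
Qed.

End S3Action.

Lemma exists_coord_pair n (C : {vspace 'rV['F_2]_n}) : (2 <= \dim C)%N ->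
  exists (p q : 'I_n) (c1 c2 : 'rV['F_2]_n),
    [/\ c1 \in C, c2 \in C, c1 0 p = 1 /\ c1 0 q = 0 & c2 0 p = 0 /\ c2 0 q = 1].
Proof.
move=> dimC; set S := [set c | c \in C].
have cardS : (4 <= #|S|)%N.
  have -> : #|S| = #|C| by apply: eq_card => c; rewrite inE.
  by rewrite card_vspace card_Fp // (leq_pexp2l (isT : (0 < 2)%N) dimC).
have S_add : {in S &, forall x y, x + y \in S}.
  by move=> x y; rewrite !inE; apply: rpredD.
have [u uS u_nz] := exists_nonzero (leq_trans (isT : (1 < 4)%N) cardS).
have [p up] := nonzero_entry u_nz.
have coord_add : {in S &, {morph (fun c : 'rV['F_2]_n => c 0 p) : x y / x + y}}.
  by move=> x y _ _ /=; rewrite mxE.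
case: (@exists_nonzero _ [set x in S | x 0 p == 0]) => [|v].
  by move: cardS; rewrite (card_fibre0 S_add coord_add uS up) -(leq_double 2).
rewrite !inE => /andP[vC /eqP vp] v_nz.
have [q vq] := nonzero_entry v_nz.
have uC : u \in C by rewrite inE in uS.
have [uq | uq] := F2_cases (u 0 q).
  by exists p, q, u, v.
exists p, q, (u + v), v; split; rewrite ?rpredD // !mxE ?up ?uq ?vp ?vq //.
by split; apply/eqP.
Qed.

Theorem proposition5p7 (n w : nat) (C : {vspace 'rV['F_2]_n}) :
  constant_weight C w -> (2 <= \dim C)%N ->
  exists H : {group 'S_n}, H \subset PAut C /\ (H \isog [set: 'S_3])%g.
Proof.
move=> C_cw dimC.
have [p [q [c1 [c2 [c1C c2C [c1p c1q] [c2p c2q]]]]]] := exists_coord_pair dimC.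
apply: (faithful_action_PAut C_cw (s3act_in p q c1C c2C)).
- by move=> s x y _ _; apply: s3actD.
- by move=> c _; apply: s3act1.
- by move=> s t c _; apply: s3actM.
- by move=> s; apply: s3act_faithful.
Qed.
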